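(* Let $p_1, \dots, p_N \in \mathbb{R}$. For each $j$, let $C^j$ be the elementary symmetric filter with $c^j(-1) = c^j(1) = 1$, $c^j(0) = p_j$, and $c^j(t) = 0$ for $|t| > 1$. Let $C_N = C^1 * C^2 * \cdots * C^N$. Then $C_N$ is invertible if and only if each $C^j$, $j = 1, \dots, N$, is invertible.
   Context: Sequences are indexed by $\mathbb{Z}$. The convolution of sequences $A, B$ is $(A * B)(t) = \sum_{k} a(k) b(t-k)$. The unit sequence $I$ is defined by $I(0) = 1$ and $I(t) = 0$ for $t \neq 0$. A finite filter $C$ is called invertible if there exists a sequence $Z = (z(t))_{t\in\mathbb{Z}}$ with $C * Z = I$ such that $Z$ is summable, i.e. $\sum_t |z(t)| < \infty$, and its entries converge to $0$ exponentially fast, i.e. $|z(t)| \le K r^{|t|}$ for some constants $K > 0$ and $0 < r < 1$. *)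

From mathcomp Require Import all_boot all_order all_algebra.
From mathcomp Require Import reals.
Set Implicit Arguments. Unset Strict Implicit. Unset Printing Implicit Defensive.
Import Order.TTheory GRing.Theory Num.Theory.
Local Open Scope ring_scope.

Section Filters.
Variable R : realType.

Definition supported_in (M : nat) (a : int -> R) : Prop :=
  forall t : int, (M < absz t)%N -> a t = 0.

(* convolution (a * b)(t) = sum_k a(k) b(t-k), for a supported in [-M, M]
   (the sum over k in Z then reduces to k in [-M, M]). *)
Definition fconv (M : nat) (a b : int -> R) : int -> R :=
  fun t => \sum_(k < (M + M).+1) a (k%:Z - M%:Z) * b (t - (k%:Z - M%:Z)).

Definition unitseq : int -> R := fun t => if t == 0 then 1 else 0.

Definition summable (z : int -> R) : Prop :=
  exists B : R, forall n : nat,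
    \sum_(k < (n + n).+1) `|z (k%:Z - n%:Z)| <= B.

Definition exp_decay (z : int -> R) : Prop :=
  exists K : R, exists r : R, 0 < K /\ 0 < r /\ r < 1 /\
    forall t : int, `|z t| <= K * r ^+ absz t.

Definition invertible (c : int -> R) : Prop :=
  exists M : nat, supported_in M c /\
    exists z : int -> R,
      (forall t, fconv M c z t = unitseq t) /\ summable z /\ exp_decay z.

Definition elemfilt (p : R) : int -> R :=
  fun t => if t == 0 then p else if absz t == 1%N then 1 else 0.

Definition filtprod (ps : seq R) : int -> R :=
  foldr (fun p acc => fconv 1 (elemfilt p) acc) unitseq ps.

End Filters.

(* Convolution with C^j is the operator [elemop p_j : y |-> y(t+1) + p_j y(t) + y(t-1)],
   and these operators commute.  If |p| > 2, the polynomial X^2 + p X + 1 has a root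
   lam with |lam| < 1, so [elemop p] factors into two first-order operators, each
   inverted on exponentially decaying sequences by a geometric series.  If |p| <= 2,
   write p = -2 cos theta: then u(t) = cos (theta t) is a bounded solution of
   [elemop p u = 0], and the Wronskian of u with a decaying solution y of
   [elemop p y = I] would be constant on t >= 0 and on t < 0 with a jump u(0) = 1
   between them, yet tend to 0 at both ends.  By commutativity a decaying inverse of
   C_N also yields one for each C^j, so both sides of the theorem say |p_j| > 2. *)

From Pilot Require Import Defs.
From mathcomp Require Import all_boot all_order all_algebra.
From mathcomp Require Import all_classical all_reals all_analysis.
From mathcomp Require Import zify ring lra.
Set Implicit Arguments. Unset Strict Implicit. Unset Printing Implicit Defensive.
Import Order.TTheory GRing.Theory Num.Theory.
Import numFieldNormedType.Exports.
Local Open Scope ring_scope.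

Section CenteredSums.
Variable R : realType.
Implicit Types (f g c x : int -> R) (M N : nat).

Definition csum N f : R := \sum_(i < (N + N).+1) f (i%:Z - N%:Z).

Lemma csumS N f : csum N.+1 f = f (- N.+1%:Z) + csum N f + f N.+1%:Z.
Proof.
rewrite /csum (_ : (N.+1 + N.+1).+1 = (N + N).+3)%N; last by lia.
rewrite big_ord_recl big_ord_recr /= sub0r addrA; congr (_ + _ + _).
- by apply: eq_bigr => i _; congr f; rewrite /bump /=; lia.
- by congr f; rewrite /bump /=; lia.
Qed.

Lemma csum_widen M N f : supported_in M f -> (M <= N)%N -> csum N f = csum M f.
Proof.
move=> fM /subnKC <-; elim: (N - M)%N => [|d IH]; first by rewrite addn0.
by rewrite addnS csumS IH !fM ?addr0 ?add0r //=; lia.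
Qed.

Lemma csum_shift1 N f : f (- N%:Z) = f (N%:Z + 1) ->
  csum N (fun k => f (k + 1)) = csum N f.
Proof.
move=> f_ends; rewrite /csum [LHS]big_ord_recr [RHS]big_ord_recl /= sub0r.
rewrite (_ : (N + N)%N%:Z - N%:Z + 1 = N%:Z + 1); last by lia.
rewrite f_ends addrC; congr (_ + _).
by apply: eq_bigr => i _; congr f; rewrite /bump /=; lia.
Qed.

Lemma csum_shiftS M N f : supported_in M f -> (M < N)%N ->
  csum N (fun k => f (k + 1)) = csum N f.
Proof. by move=> fM ltMN; apply: csum_shift1; rewrite !fM //; lia. Qed.

Lemma csum_shiftN M N f : supported_in M f -> (M < N)%N ->
  csum N (fun k => f (k - 1)) = csum N f.
Proof.
move=> fM ltMN; rewrite -(@csum_shift1 N (fun k => f (k - 1))); last first.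
  by rewrite !fM //; lia.
by apply: eq_bigr => i _; rewrite addrK.
Qed.

Lemma supported_mulr M f g : supported_in M f -> supported_in M (fun k => f k * g k).
Proof. by move=> fM k Mk; rewrite fM ?mul0r. Qed.

Lemma fconvE M c x t : fconv M c x t = csum M (fun k => c k * x (t - k)).
Proof. by []. Qed.

Lemma fconv_widen M N c x t :
  supported_in M c -> supported_in N c -> fconv M c x t = fconv N c x t.
Proof.
move=> cM cN; rewrite !fconvE.
by rewrite -(@csum_widen M (maxn M N)) 1?(@csum_widen N (maxn M N))
  ?leq_maxl ?leq_maxr //; exact: supported_mulr.
Qed.

End CenteredSums.

Section ElementaryOperator.
Variable R : realType.
Implicit Types (p q : R) (ps : seq R) (x y F : int -> R).

Definition elemop p y : int -> R := fun t => y (t + 1) + p * y t + y (t - 1).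

Definition elemops ps y : int -> R := foldr elemop y ps.

Lemma elemopC p q y : elemop p (elemop q y) = elemop q (elemop p y).
Proof. by apply: funext => t; rewrite /elemop ?addrK ?subrK; ring. Qed.

Lemma fconv_elemfilt p y t : fconv 1 (elemfilt p) y t = elemop p y t.
Proof.
rewrite fconvE /csum !big_ord_recr big_ord0 /= /elemfilt /elemop /= add0r !mul1r.
by congr (y _ + _ * y _ + y _); lia.
Qed.

Lemma supported_elemfilt p : supported_in 1 (elemfilt p).
Proof. by case=> [[|[|n]]|[|n]]. Qed.

Lemma supported_elemop n p F : supported_in n F -> supported_in n.+1 (elemop p F).
Proof. by move=> Fn t ltnt; rewrite /elemop !Fn ?mulr0 ?addr0 //; lia. Qed.

Lemma fconv_elemop n p F x t : supported_in n F ->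
  fconv n.+1 (elemop p F) x t = elemop p (fconv n F x) t.
Proof.
move=> Fn; rewrite !fconvE /elemop.
have -> : csum n.+1 (fun k => (F (k + 1) + p * F k + F (k - 1)) * x (t - k)) =
    csum n.+1 (fun k => F (k + 1) * x (t + 1 - (k + 1)))
  + p * csum n.+1 (fun k => F k * x (t - k))
  + csum n.+1 (fun k => F (k - 1) * x (t - 1 - (k - 1))).
  rewrite /csum mulr_sumr -!big_split; apply: eq_bigr => i _.
  rewrite (_ : t + 1 - _ = t - (i%:Z - n.+1%:Z)) 1?(_ : t - 1 - _ = t - (i%:Z - n.+1%:Z));
    by [rewrite /=; ring | lia].
rewrite (@csum_shiftS _ n _ (fun k => F k * x (t + 1 - k)))
  1?(@csum_shiftN _ n _ (fun k => F k * x (t - 1 - k))) ?(@csum_widen _ n n.+1) //.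
all: exact: supported_mulr.
Qed.

Lemma filtprodE ps : filtprod ps = elemops ps (unitseq R).
Proof.
elim: ps => [//|p ps IH] /=.
by rewrite -IH; apply: funext => t; exact: fconv_elemfilt.
Qed.

Lemma supported_filtprod ps : supported_in (size ps) (filtprod ps).
Proof.
rewrite filtprodE; elim: ps => [|p ps IH] /=; last exact: supported_elemop.
by case=> [[|n]|n].
Qed.

Lemma fconv_filtprod ps x t : fconv (size ps) (filtprod ps) x t = elemops ps x t.
Proof.
elim: ps t => [|p ps IH] t.
  by rewrite fconvE /csum big_ord_recr big_ord0 /= add0r mul1r subr0.
rewrite [filtprod _]filtprodE /= -filtprodE fconv_elemop; last exact: supported_filtprod.
by rewrite /elemop !IH.
Qed.

End ElementaryOperator.

Section ExponentialDecay.
Variable R : realType.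
Implicit Types (y z : int -> R).

Lemma exp_decay_rate y a : exp_decay y -> a < 1 ->
  exists K s, [/\ 0 < K, 0 < s, a < s, s < 1 &
                  forall t, `|y t| <= K * s ^+ absz t].
Proof.
move=> [K [r [K0 [r0 [r1 yK]]]]] a1.
have ler_max : r <= Num.max r a /\ a <= Num.max r a by rewrite !le_max !lexx orbT.
have max_lt1 : Num.max r a < 1 by rewrite gt_max r1.
exists K, ((Num.max r a + 1) / 2); split => //; try lra.
move=> t; apply: (le_trans (yK t)); rewrite ler_pM2l //.
by apply: lerXn2r; rewrite ?nnegrE; lra.
Qed.

Lemma exp_decay_small y e : exp_decay y -> 0 < e ->
  exists N, forall t, (N <= absz t)%N -> `|y t| < e.
Proof.
move=> [K [r [K0 [r0 [r1 yK]]]]] e0.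
have r1' : `|r| < 1 by rewrite ger0_norm ?ltW.
have /cvgrPdist_lt/(_ e e0) [N _ KrN] := cvg_geometric K r1'.
exists N => t Nt; apply: le_lt_trans (yK t) _.
move: (KrN _ Nt); rewrite sub0r normrN ger0_norm //.
by rewrite mulr_ge0 ?exprn_ge0 ?ltW.
Qed.

Lemma exp_decayD y z : exp_decay y -> exp_decay z -> exp_decay (fun t => y t + z t).
Proof.
move=> [K [r [K0 [r0 [r1 yK]]]]] /exp_decay_rate/(_ r1) [L [s [L0 s0 rs s1 zL]]].
exists (K + L), s; do !split => //; first exact: addr_gt0.
move=> t; apply: (le_trans (ler_normD _ _)); rewrite mulrDl lerD //.
apply: (le_trans (yK t)); rewrite ler_pM2l //.
by apply: lerXn2r; rewrite ?nnegrE ltW.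
Qed.

Lemma exp_decayZ c y : exp_decay y -> exp_decay (fun t => c * y t).
Proof.
move=> [K [r [K0 [r0 [r1 yK]]]]].
exists ((`|c| + 1) * K), r; do !split => //; first by rewrite mulr_gt0 // ltr_wpDl.
move=> t; rewrite normrM -mulrA ler_pM // ?lerDl //; exact: yK.
Qed.

Lemma exp_decay_shift d y : exp_decay y -> exp_decay (fun t => y (t + d)).
Proof.
move=> [K [r [K0 [r0 [r1 yK]]]]].
exists (K / r ^+ absz d), r; do !split => //; first by rewrite divr_gt0 ?exprn_gt0.
move=> t; apply: (le_trans (yK _)).
rewrite -mulrA ler_pM2l // ler_pdivlMl ?exprn_gt0 // -exprD.
by apply: ler_wiXn2l; rewrite ?ltW //; lia.
Qed.

Lemma exp_decay_reflect y : exp_decay y -> exp_decay (fun t => y (- t)).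
Proof.
move=> [K [r [K0 [r0 [r1 yK]]]]]; exists K, r; do !split => //.
by move=> t; rewrite -[X in r ^+ X]abszN.
Qed.

Lemma exp_decay_unitseq : exp_decay (unitseq R).
Proof.
exists 1, (1 / 2); do !split; try lra.
move=> t; rewrite /unitseq; case: eqP => [->|_]; first by rewrite normr1 mulr1.
by rewrite normr0 mul1r exprn_ge0.
Qed.

Lemma csum_geometric (r : R) n :
  csum n (fun k => r ^+ absz k) * (1 - r) = 1 + r - 2 * r ^+ n.+1.
Proof.
elim: n => [|n IH]; first by rewrite /csum big_ord_recr big_ord0 /=; ring.
rewrite csumS abszN /= mulrDl mulrDl IH !exprS; ring.
Qed.

Lemma exp_decay_summable y : exp_decay y -> Defs.summable y.
Proof.
move=> [K [r [K0 [r0 [r1 yK]]]]]; exists (K * ((1 + r) / (1 - r))) => n.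
apply: (le_trans (ler_sum _ (fun i _ => yK _))); rewrite -mulr_sumr ler_pM2l //.
rewrite -/(csum n (fun k => r ^+ absz k)) ler_pdivlMr ?subr_gt0 // csum_geometric.
by rewrite gerDl oppr_le0 mulr_ge0 ?exprn_ge0 ?ltW.
Qed.

Lemma elemop_decay p y : exp_decay y -> exp_decay (elemop p y).
Proof.
move=> yd; rewrite /elemop.
by do !apply: exp_decayD; [exact: exp_decay_shift|exact: exp_decayZ|exact: exp_decay_shift].
Qed.

Lemma elemops_decay ps y : exp_decay y -> exp_decay (elemops ps y).
Proof. by move=> yd; elim: ps => [//|p ps IH] /=; exact: elemop_decay. Qed.

End ExponentialDecay.

Section NoDecayingFundamentalSolution.
Variable R : realType.
Implicit Types (p : R) (y u : int -> R).

Definition wronskian y u t : R := y (t + 1) * u t - y t * u (t + 1).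

Lemma wronskianB p y u t :
  wronskian y u t - wronskian y u (t - 1) = u t * elemop p y t - y t * elemop p u t.
Proof. by rewrite /wronskian /elemop subrK; ring. Qed.

Lemma wronskian_le y u t : (forall s, `|u s| <= 1) ->
  `|wronskian y u t| <= `|y (t + 1)| + `|y t|.
Proof.
move=> u1; apply: (le_trans (ler_normB _ _)); rewrite !normrM.
by apply: lerD; rewrite -[X in _ <= X]mulr1 ler_wpM2l.
Qed.

Definition cos_solution p (t : int) : R := cos (acos (- p / 2) * t%:~R).

Lemma elemop_cos_solution p t : `|p| <= 2 -> elemop p (cos_solution p) t = 0.
Proof.
move=> p2; have : cos (acos (- p / 2)) = - p / 2.
  by rewrite acosK // in_itv /=; move: p2; rewrite ler_norml; lra.
rewrite /elemop /cos_solution !intrD !mulrDr mulrN1 mulr1 cosD cosB => cos_acos.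
by rewrite cos_acos; field.
Qed.

Lemma decaying_fundamental_gt2 p y :
  exp_decay y -> elemop p y = unitseq R -> 2 < `|p|.
Proof.
move=> yd yfund; rewrite ltNge; apply/negP => p2.
pose u := cos_solution p; pose W := wronskian y u.
have u_bound s : `|u s| <= 1 by rewrite ler_norml cos_le1 cos_geN1.
have W_step (t : int) : t != 0 -> W t = W (t - 1).
  move=> t0; apply/eqP; rewrite -subr_eq0 (wronskianB p) yfund.
  by rewrite elemop_cos_solution // /unitseq (negbTE t0) !mulr0 subr0.
have W_jump (N : nat) : W N%:Z - W (- N.+1%:Z) = 1.
  elim: N => [|N IH].
    rewrite (wronskianB p) yfund elemop_cos_solution // /u /cos_solution mulr0 cos0.
    by rewrite mul1r mulr0 subr0 /unitseq eqxx.
  rewrite (W_step N.+1%:Z) // (_ : N.+1%:Z - 1 = N); last by lia.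
  by rewrite (_ : - N.+2%:Z = - N.+1%:Z - 1) -?W_step //; lia.
have [N yN] : exists N, forall t, (N <= absz t)%N -> `|y t| < 1 / 4.
  by apply: (exp_decay_small yd); lra.
have W_small t : (N <= absz t)%N -> (N <= absz (t + 1)%R)%N -> `|W t| < 1 / 2.
  move=> /yN yt /yN yt1; apply: le_lt_trans (wronskian_le y t u_bound) _; lra.
have := ler_normB (W N) (W (- N.+1%:Z)); rewrite W_jump normr1.
have := W_small N ltac:(lia) ltac:(lia).
have := W_small (- N.+1%:Z) ltac:(lia) ltac:(lia).
lra.
Qed.

End NoDecayingFundamentalSolution.

Section DecayingSolutions.
Variable R : realType.
Implicit Types (p lam : R) (g : int -> R).

Lemma dominated_series (f : nat -> R) C q : 0 <= q < 1 ->
  (forall k, `|f k| <= C * q ^+ k) ->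
  cvgn (series f) /\ `|limn (series f)| <= C / (1 - q).
Proof.
move=> /andP[q0 q1] fC; have q1' : `|q| < 1 by rewrite ger0_norm.
have C0 : 0 <= C by have := fC 0%N; rewrite expr0 mulr1; exact: le_trans.
have cvg_norm : cvgn [normed series f].
  apply: (@series_le_cvg R (fun k => `|f k|) (geometric C q)) => //.
  - by move=> k; exact: geometric_ge0.
  - exact: is_cvg_geometric_series.
split; first exact: normed_cvg.
apply: (le_trans (lim_series_norm cvg_norm)).
apply: (le_trans (@lim_series_le R (fun k => `|f k|) (geometric C q) cvg_norm
  (@is_cvg_geometric_series R C q q1') fC)).
by rewrite (cvg_lim _ (@cvg_geometric_series R C q q1')).
Qed.

Lemma first_order_solve lam g : `|lam| < 1 -> exp_decay g ->
  exists h, exp_decay h /\ forall t, h t = g t + lam * h (t + 1).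
Proof.
move=> lam1 /exp_decay_rate/(_ lam1) [K [s [K0 s0 lam_s s1 gK]]].
pose q := `|lam| / s.
have q01 : 0 <= q < 1 by rewrite /q divr_ge0 ?(ltW s0) //= ltr_pdivrMr // mul1r.
pose f t k := lam ^+ k * g (t + k%:Z).
have f_bound t k : `|f t k| <= K * s ^+ absz t * q ^+ k.
  rewrite normrM normrX expr_div_n mulrCA -mulrA ler_wpM2l ?exprn_ge0 //.
  apply: (le_trans (gK _)); rewrite ler_pM2l // ler_pdivlMr ?exprn_gt0 // -exprD.
  by apply: ler_wiXn2l; rewrite ?ltW //; lia.
have f_sum t := dominated_series q01 (f_bound t).
exists (fun t => limn (series (f t))); split.
  exists (K / (1 - q)), s; do !split => //; first by rewrite divr_gt0 // subr_gt0; case/andP: q01.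
  by move=> t; rewrite mulrAC; exact: (f_sum t).2.
move=> t; have series_rec : (fun n => series (f t) n.+1) =
    (fun n => g t + lam * series (f (t + 1)) n).
  apply: funext => n; rewrite !seriesEord /= big_ord_recl /f addr0 mul1r mulr_sumr.
  congr (_ + _); apply: eq_bigr => i _; rewrite exprS -mulrA /bump /=.
  by congr (_ * (_ * g _)); rewrite /bump leq0n; lia.
have lim_shift : ((fun n => series (f t) n.+1) @ \oo --> limn (series (f t)))%classic.
  by rewrite cvg_shiftS; exact: (f_sum t).1.
rewrite series_rec in lim_shift; rewrite -(cvg_lim _ lim_shift) //.
apply: cvg_lim => //; apply: cvgD; first exact: cvg_cst.
exact: cvgMl_tmp (f_sum (t + 1)).1.
Qed.

Lemma first_order_solve_rev lam g : `|lam| < 1 -> exp_decay g ->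
  exists h, exp_decay h /\ forall t, h t = g t + lam * h (t - 1).
Proof.
move=> lam1 /exp_decay_reflect /(first_order_solve lam1) [h [hd h_rec]].
exists (fun t => h (- t)); split; first exact: exp_decay_reflect.
by move=> t; rewrite h_rec opprK opprD.
Qed.

Lemma elemop_char_root p : 2 < `|p| -> exists lam, lam ^+ 2 + p * lam + 1 = 0 /\ `|lam| < 1.
Proof.
wlog p2 : p / 2 < p => [wlog_p|_].
  move=> p_gt2; case: (ltrP 2 p) => [p2|p_le2]; first exact: wlog_p p2 p_gt2.
  have p_lt : 2 < - p by move: p_gt2; rewrite ltr_normr ltNge p_le2.
  have := wlog_p (- p) p_lt; rewrite normrN => /(_ p_gt2) [lam [root lam1]].
  by exists (- lam); rewrite normrN; split => //; rewrite -root; ring.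
pose s := Num.sqrt (p ^+ 2 - 4).
have s0 : 0 <= s by exact: sqrtr_ge0.
have s2 : s ^+ 2 = p ^+ 2 - 4 by rewrite sqr_sqrtr //; nra.
exists ((s - p) / 2); split; first by nra.
by rewrite ltr_norml; apply/andP; split; nra.
Qed.

(* For a root [lam] of [X^2 + p X + 1], [- lam * elemop p] factors as
   [(1 - lam S) (1 - lam S^-1)], where [S y t = y (t + 1)]. *)
Lemma elemop_solve p g : 2 < `|p| -> exp_decay g ->
  exists w, exp_decay w /\ elemop p w = g.
Proof.
move=> /elemop_char_root [lam [root lam1]] gd.
have lam0 : lam != 0 by apply: contra_eq_neq root => ->; rewrite expr0n mulr0 !add0r oner_neq0.
have [v [vd v_rec]] := first_order_solve lam1 (exp_decayZ (- lam) gd).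
have [w [wd w_rec]] := first_order_solve_rev lam1 vd.
exists w; split => //; apply: funext => t; apply: (mulfI lam0).
have -> : lam * elemop p w t = lam * (w (t + 1) - lam * w t) - (w t - lam * w (t - 1))
                              + (lam ^+ 2 + p * lam + 1) * w t by rewrite /elemop; ring.
have w_rec1 : w (t + 1) - lam * w t = v (t + 1) by rewrite w_rec addrK; ring.
have w_rec0 : w t - lam * w (t - 1) = v t by rewrite [w t]w_rec; ring.
have v_rec0 : lam * v (t + 1) - v t = lam * g t by rewrite [v t]v_rec; ring.
by rewrite w_rec1 w_rec0 root mul0r addr0 v_rec0.
Qed.

Lemma elemops_solve ps g : {in ps, forall p, 2 < `|p|} -> exp_decay g ->
  exists w, exp_decay w /\ elemops ps w = g.
Proof.
elim: ps g => [|q ps IH] g ps2 gd; first by exists g.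
have [w1 [w1d <-]] := elemop_solve (ps2 q (mem_head q ps)) gd.
have [w [wd <-]] := IH w1 (fun p pps => ps2 p (mem_behead (s := q :: ps) pps)) w1d.
by exists w.
Qed.

End DecayingSolutions.

Section Invertibility.
Variable R : realType.
Implicit Types (p : R) (ps : seq R) (c z : int -> R).

Lemma elemops_mem ps p z : p \in ps -> exp_decay z ->
  exists y, exp_decay y /\ elemops ps z = elemop p y.
Proof.
elim: ps => [//|q ps IH]; rewrite in_cons => /orP[/eqP-> | pps] zd /=.
  by exists (elemops ps z); split => //; exact: elemops_decay.
have [y [yd ->]] := IH pps zd.
by exists (elemop q y); split; [exact: elemop_decay | exact: elemopC].
Qed.

Lemma invertibleP M c : supported_in M c ->
  invertible c <-> exists z, exp_decay z /\ forall t, fconv M c z t = unitseq R t.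
Proof.
move=> cM; split => [[N [cN [z [zinv [_ zd]]]]] | [z [zd zinv]]].
  by exists z; split => // t; rewrite (fconv_widen _ _ cM cN).
by exists M; split => //; exists z; split => //; split => //; exact: exp_decay_summable.
Qed.

Lemma invertible_elemfilt p : invertible (elemfilt p) <-> 2 < `|p|.
Proof.
rewrite (invertibleP (supported_elemfilt p)); split => [[z [zd zinv]] | p2].
  by apply: (decaying_fundamental_gt2 zd); apply: funext => t; rewrite -zinv fconv_elemfilt.
have [w [wd wfund]] := elemop_solve p2 (exp_decay_unitseq R).
by exists w; split => // t; rewrite fconv_elemfilt wfund.
Qed.

Lemma invertible_filtprod ps : invertible (filtprod ps) <-> {in ps, forall p, 2 < `|p|}.
Proof.
rewrite (invertibleP (@supported_filtprod R ps)); split => [[z [zd zinv]] p pps | ps2].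
  have [y [yd yz]] := elemops_mem pps zd.
  by apply: (decaying_fundamental_gt2 yd); apply: funext => t; rewrite -yz -fconv_filtprod.
have [w [wd wfund]] := elemops_solve ps2 (exp_decay_unitseq R).
by exists w; split => // t; rewrite fconv_filtprod wfund.
Qed.

End Invertibility.

Theorem mainTheorem2 (R : realType) (ps : seq R) :
  invertible (filtprod ps) <->
  (forall j : nat, (j < size ps)%N -> invertible (elemfilt (nth 0 ps j))).
Proof.
rewrite invertible_filtprod; split => [ps2 j lt_j | inv_nth p /(nthP 0) [j lt_j <-]].
  by rewrite invertible_elemfilt; apply: ps2; exact: mem_nth.
by rewrite -invertible_elemfilt; exact: inv_nth.
Qed.
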